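(* Let $G$ be a group of order $N$, let $d\geqslant2$ be an integer, and let $\delta>0$ and $\varepsilon>0$ satisfy $0<\delta<\min\{\varepsilon/4,1/(4d)\}$ and $N^{\delta}\geqslant 4^{d+2}d^{d+3}$, with $N$ sufficiently large. Then the $\delta$-dependency graph $H$ has an independent set $I$ of size at least $N^{1-3\delta}$ such that, for each $x\in I$ and each $1\leqslant k\leqslant d$, the hypergraph $\Gamma_x$ has at most $N^{k-1+\delta}$ edges of size $k$.
   Context: For $x\in G\setminus\{1\}$, $\Gamma_x$ is the hypergraph with vertex set $G\setminus\{1\}$ whose edges are the subsets $E\subseteq G\setminus\{1\}$ for which there exist an integer $\ell$ with $|E|\leqslant\ell\leqslant d$, elements $h_1,\ldots,h_\ell\in E$ (not necessarily distinct) and signs $a_1,\ldots,a_\ell\in\{-1,1\}$ such that every element of $E$ appears at least once among $h_1,\ldots,h_\ell$ and $h_1^{a_1}\cdots h_\ell^{a_\ell}=x$. The $\delta$-dependency graph $H$ has vertex set $G\setminus\{1\}$, with $x\neq y$ adjacent iff for some integers $r,s,t$ with $d\geqslant r,s\geqslant t\geqslant1$ there are at least $N^{r+s-t-1-\delta}$ pairs $(e,f)$ where $e$ is an edge of $\Gamma_x$ with $|e|=r$, $f$ is an edge of $\Gamma_y$ with $|f|=s$, and $|e\cap f|=t$. *)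

From HB Require Import structures.
From mathcomp Require Import all_boot all_order all_algebra all_fingroup.
From mathcomp Require Import reals exp.
Set Implicit Arguments. Unset Strict Implicit. Unset Printing Implicit Defensive.
Import Order.TTheory GRing.Theory Num.Theory.

Section Defs.
Variable gT : finGroupType.
Local Open Scope group_scope.

Definition is_edge (d : nat) (x : gT) (E : {set gT}) : bool :=
  (1 \notin E) &&
  [exists l : 'I_d.+1, (#|E| <= l)%N &&
    [exists h : {ffun 'I_l -> gT}, [exists a : {ffun 'I_l -> bool},
      [&& [forall i, h i \in E], [forall y in E, [exists i, h i == y]]
        & (\prod_(i < l) (if a i then h i else (h i)^-1)) == x]]]].

Definition edges_of_size (d : nat) (x : gT) (k : nat) : {set {set gT}} :=
  [set E | is_edge d x E & #|E| == k].

Definition pair_count (d : nat) (x y : gT) (r s t : nat) : nat :=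
  #|[set p : {set gT} * {set gT} |
      [&& p.1 \in edges_of_size d x r, p.2 \in edges_of_size d y s
        & #|p.1 :&: p.2| == t]]|.
End Defs.

Local Open Scope ring_scope.

Definition dep_adj (R : realType) (gT : finGroupType) (d : nat) (delta : R)
    (x y : gT) : Prop :=
  x != 1%g /\ y != 1%g /\ x != y /\
  exists r s t : nat,
    (r <= d)%N /\ (s <= d)%N /\ (t <= r)%N /\ (t <= s)%N /\ (1 <= t)%N /\
    #|gT|%:R `^ ((r + s - t - 1)%N%:R - delta) <= (pair_count d x y r s t)%:R.

Definition dep_independent (R : realType) (gT : finGroupType) (d : nat)
    (delta : R) (I : {set gT}) : Prop :=
  (1%g \notin I) /\
  (forall x y, x \in I -> y \in I -> x != y -> ~ dep_adj d delta x y).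

(* Encoding the witnesses of edges by words of length d shows that, summed
   over x, Gamma_x has at most C N^k edges of size k, and that the pair counts
   of (r, s, t) summed over all (x, y) are at most C N^(r+s-t).  With
   a = N^delta, Markov's inequality then gives that at most C N / a vertices
   have more than N^(k-1+delta) edges of some size k, and that H has at most
   C N a edges, so at most N / 4 vertices have degree above 4 C a.  A maximal
   independent set S among the remaining (at least N / 2) vertices dominates
   them, whence N / 2 <= |S| (1 + 4 C a); this beats N^(1-3 delta) = N / a^3
   once a is large. *)

From HB Require Import structures.
From mathcomp Require Import all_boot all_order all_algebra all_fingroup.
From mathcomp Require Import reals exp.
From mathcomp Require Import zify lra.
Set Implicit Arguments. Unset Strict Implicit. Unset Printing Implicit Defensive.
Import Order.TTheory GRing.Theory Num.Theory.

Lemma bin_leq_exp n k : 'C(n, k) <= n ^ k.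
Proof.
apply: leq_trans (_ : n ^_ k <= _).
  by rewrite -bin_ffact leq_pmulr ?fact_gt0.
rewrite ffact_prod -[k in n ^ k]card_ord -prod_nat_const.
by apply: leq_prod => i _; rewrite leq_subr.
Qed.

Lemma card_set_pairs (T U : finType) (P : T -> U -> bool) :
  #|[set p : T * U | P p.1 p.2]| = \sum_x #|[set y | P x y]|.
Proof.
under eq_bigr do rewrite -sum1dep_card.
by rewrite -sum1dep_card pair_big_dep.
Qed.

Lemma sum_card_exchange (I T : finType) (P : I -> T -> bool) :
  \sum_i #|[set x | P i x]| = \sum_x #|[set i | P i x]|.
Proof.
under eq_bigr do rewrite -sum1dep_card big_mkcond.
rewrite exchange_big; apply: eq_bigr => x _.
by rewrite -sum1dep_card [RHS]big_mkcond.
Qed.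

Lemma card_bigcup_leq (I T : finType) (P : pred I) (F : I -> {set T}) :
  #|\bigcup_(i | P i) F i| <= \sum_(i | P i) #|F i|.
Proof.
elim/big_ind2: _ => [|m A n B mA nB|//]; first by rewrite cards0.
by apply: leq_trans (leq_card_setU A B) _; apply: leq_add.
Qed.

Lemma card_sets_meeting (T : finType) (e : {set T}) s t :
  #|[set f : {set T} | (#|f| == s) && (#|e :&: f| == t)]|
    <= 2 ^ #|e| * 'C(#|T|, s - t).
Proof.
set A := [set f | _].
have split_inj : {in A &, injective (fun f => (f :&: e, f :\: e))}.
  by move=> f1 f2 _ _ [eq1 eq2]; rewrite -(setID f1 e) -(setID f2 e) eq1 eq2.
rewrite -(card_in_imset split_inj) -card_powerset -card_draws -cardsX.
apply/subset_leq_card/subsetP => _ /imsetP [f /[!inE] /andP [/eqP fs /eqP eft] ->].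
by rewrite /= subsetIr cardsD fs (setIC f e); apply/eqP; congr (_ - _).
Qed.

Lemma card_pairs_meeting (T : finType) r s t :
  #|[set p : {set T} * {set T} |
      [&& #|p.1| == r, #|p.2| == s & #|p.1 :&: p.2| == t]]|
    <= 'C(#|T|, r) * (2 ^ r * 'C(#|T|, s - t)).
Proof.
rewrite (card_set_pairs (fun e f : {set T} => [&& #|e| == r, #|f| == s & #|e :&: f| == t])).
rewrite (bigID (fun e : {set T} => #|e| == r)) /= [X in _ + X]big1 => [|e /negbTE ne].
  rewrite addn0 -card_draws -sum_nat_cond_const; apply: leq_sum => e /eqP er.
  rewrite -er; apply: leq_trans (card_sets_meeting e s t).
  by apply/subset_leq_card/subsetP => f; rewrite !inE eqxx.
by apply: eq_card0 => f; rewrite !inE ne.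
Qed.

Section MaximalIndependentSet.
Variables (T : finType) (e : rel T) (V : {set T}).

Definition independent (S : {set T}) :=
  (S \subset V) && [forall x in S, forall y in S, (x != y) ==> ~~ e x y].

Definition degree_in (x : T) := #|[set y in V | e x y || e y x]|.

Lemma maxset_independent_dominating S : maxset independent S ->
  V \subset S :|: \bigcup_(s in S) [set y in V | e s y || e y s].
Proof.
move=> /maxsetP [/andP [sSV /forall_inP indepS] maxS].
apply/subsetP => v Vv; rewrite inE; have [//|vNS] /= := boolP (v \in S).
apply: contraT => nadj.
have nadj_v s : s \in S -> ~~ (e s v || e v s).
  by move=> Ss; apply: contra nadj => adj; apply/bigcupP; exists s; rewrite // inE Vv.
have ind_vS : independent (v |: S).
  rewrite /independent subUset sub1set Vv sSV /=.
  apply/forall_inP => x /setU1P xS; apply/forall_inP => y /setU1P yS.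
  case: xS => [->|xS]; case: yS => [->|yS].
  - by rewrite eqxx.
  - by have := nadj_v y yS; rewrite negb_or => /andP [_ ->]; rewrite implybT.
  - by have := nadj_v x xS; rewrite negb_or => /andP [-> _]; rewrite implybT.
  - by have /forall_inP := indepS x xS; apply.
by move: vNS; rewrite -(maxS _ ind_vS (subsetUr _ _)) setU11.
Qed.

Lemma exists_maximal_independent :
  exists2 S, independent S & #|V| <= \sum_(s in S) (degree_in s).+1.
Proof.
have [S maxS] : {S | maxset independent S}.
  by apply: ex_maxset; exists set0; rewrite /independent sub0set;
    apply/forall_inP => x; rewrite inE.
exists S; first by case/maxsetP: maxS.
apply: leq_trans (subset_leq_card (maxset_independent_dominating maxS)) _.
apply: leq_trans (leq_card_setU _ _) _.
rewrite (eq_bigr (fun s => 1 + degree_in s)) // big_split /= sum1_card leq_add2l.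
exact: card_bigcup_leq.
Qed.

End MaximalIndependentSet.

Section EdgeFibers.
Variables (gT : finGroupType) (d : nat).
Local Open Scope group_scope.

Definition letter (o : option (bool * gT)) : gT :=
  if o is Some (b, h) then (if b then h else h^-1) else 1.

Definition word_value (w : {ffun 'I_d -> option (bool * gT)}) : gT :=
  \prod_(i < d) letter (w i).

Definition letters (E : {set gT}) : {set option (bool * gT)} :=
  None |: (Some @: setX setT E).

Lemma card_letters E : (#|letters E| <= (2 * #|E|).+1)%N.
Proof.
rewrite cardsU1 -add1n leq_add ?leq_b1 //.
by apply: leq_trans (leq_imset_card _ _) _; rewrite cardsX cardsT card_bool.
Qed.

Lemma prod_ord_pad l (F : 'I_l -> gT) : (l <= d)%N ->
  \prod_(i < d) oapp F 1 (insub (val i)) = \prod_(i < l) F i.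
Proof.
move=> le_ld; have -> : \prod_(i < l) F i = \prod_(i < l) oapp F 1 (insub (val i)).
  by apply: eq_bigr => i _; rewrite valK.
rewrite (big_ord_widen d (fun k => oapp F 1 (insub k)) le_ld) [RHS]big_mkcond.
by apply: eq_bigr => i _; case: ltnP => // le_li; rewrite insubN // -leqNgt.
Qed.

(* A witness h_1^a_1 ... h_l^a_l = x of an edge E is padded with identity
   letters to a word of length d over [letters E]. *)
Lemma edge_fiber_sub E :
  [set x | is_edge d x E] \subset word_value @: ffun_on (letters E).
Proof.
apply/subsetP => x /[!inE] /andP [_ /existsP [l /andP [_]]].
move=> /existsP [h /existsP [a /and3P [/forallP hE _ /eqP <-]]].
apply/imsetP; exists [ffun i => omap (fun j : 'I_l => (a j, h j)) (insub (val i))].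
  apply/ffun_onP => i; rewrite ffunE /letters.
  case: insubP => [j _ _|_] /=; last exact: setU11.
  by apply/setU1P; right; apply: imset_f; rewrite in_setX in_setT hE.
rewrite /word_value -(@prod_ord_pad l (fun j => letter (Some (a j, h j)))) 1?leq_ord //.
by apply: eq_bigr => i _; rewrite ffunE; case: insub.
Qed.

Lemma card_edge_fiber (E : {set gT}) :
  (#|[set x | is_edge d x E]| <= (2 * #|E|).+1 ^ d)%N.
Proof.
apply: leq_trans (subset_leq_card (edge_fiber_sub E)) _.
apply: leq_trans (leq_imset_card _ _) _.
rewrite card_ffun_on card_ord; case: d => // n.
by rewrite leq_exp2r // card_letters.
Qed.

End EdgeFibers.

Section EdgeCounts.
Variables (gT : finGroupType) (d : nat).

Definition edge_const := (2 * d).+1 ^ d.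
Definition pair_const := 2 ^ d * edge_const ^ 2.
Definition degree_const := 2 * d.+1 ^ 3 * pair_const.

Lemma card_edge_fiber_le (E : {set gT}) : #|E| <= d ->
  #|[set x | is_edge d x E]| <= edge_const.
Proof.
move=> Ed; apply: leq_trans (card_edge_fiber d E) _.
rewrite /edge_const; case: d Ed => // n Ed.
by rewrite leq_exp2r // ltnS leq_mul2l Ed orbT.
Qed.

Lemma sum_card_edges k : k <= d ->
  \sum_(x : gT) #|edges_of_size d x k| <= #|gT| ^ k * edge_const.
Proof.
move=> kd; under eq_bigr do rewrite -cardsE.
rewrite (sum_card_exchange (fun x E => E \in edges_of_size d x k)).
rewrite (bigID (fun E : {set gT} => #|E| == k)) /= [X in _ + X]big1 => [|E /negbTE Ek].
  rewrite addn0.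
  apply: leq_trans (_ : \sum_(E : {set gT} | #|E| == k) edge_const <= _).
    apply: leq_sum => E /eqP Ek; rewrite -Ek in kd.
    apply: leq_trans (card_edge_fiber_le kd).
    by apply/subset_leq_card/subsetP => x; rewrite !inE => /andP [].
  by rewrite sum_nat_cond_const card_draws leq_mul2r bin_leq_exp orbT.
by apply: eq_card0 => x; rewrite !inE Ek andbF.
Qed.

Lemma sum_pair_count_le_meeting r s t : r <= d -> s <= d ->
  \sum_(x : gT) \sum_(y : gT) pair_count d x y r s t
    <= #|[set p : {set gT} * {set gT} |
           [&& #|p.1| == r, #|p.2| == s & #|p.1 :&: p.2| == t]]| * edge_const ^ 2.
Proof.
move=> rd sd; rewrite pair_bigA /=.
pose good (p : {set gT} * {set gT}) := [&& #|p.1| == r, #|p.2| == s & #|p.1 :&: p.2| == t].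
rewrite (sum_card_exchange (fun q p => [&& p.1 \in edges_of_size d q.1 r,
  p.2 \in edges_of_size d q.2 s & #|p.1 :&: p.2| == t])) /=.
rewrite (bigID good) /= [X in _ + X]big1 => [|p /negbTE pN]; last first.
  apply: eq_card0 => q; rewrite !inE; apply/negbTE; apply: contraFN pN.
  by rewrite /good => /and3P [/andP [_ ->] /andP [_ ->] ->].
rewrite addn0 -sum_nat_cond_const; apply: leq_sum => -[e f] /and3P [/eqP er /eqP fs _].
apply: leq_trans (_ : #|setX [set x | is_edge d x e] [set y | is_edge d y f]| <= _).
  apply/subset_leq_card/subsetP => -[x y].
  by rewrite !inE => /and3P [/andP [-> _] /andP [-> _] _].
by rewrite cardsX expnS expn1 leq_mul // card_edge_fiber_le ?er ?fs.
Qed.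

Lemma sum_pair_count r s t : r <= d -> s <= d -> t <= s ->
  \sum_(x : gT) \sum_(y : gT) pair_count d x y r s t <= #|gT| ^ (r + s - t) * pair_const.
Proof.
move=> rd sd ts; apply: leq_trans (sum_pair_count_le_meeting t rd sd) _.
apply: leq_trans (leq_mul (card_pairs_meeting _ r s t) (leqnn _)) _.
apply: leq_trans (_ : #|gT| ^ r * (2 ^ d * #|gT| ^ (s - t)) * edge_const ^ 2 <= _).
  by rewrite leq_mul // leq_mul ?bin_leq_exp // leq_mul ?bin_leq_exp ?leq_pexp2l.
by rewrite -addnBA // expnD /pair_const !mulnA (mulnAC (#|gT| ^ r) (2 ^ d)).
Qed.

End EdgeCounts.

Local Open Scope ring_scope.

Lemma markov_card (R : numDomainType) (T : finType) (f : T -> R) (th : R)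
    (A : {set T}) :
  (forall x, 0 <= f x) -> (forall x, x \in A -> th <= f x) ->
  #|A|%:R * th <= \sum_x f x.
Proof.
move=> f_ge0 A_th; rewrite mulr_natl -sumr_const.
apply: le_trans (_ : \sum_(x in A) f x <= _); first exact: ler_sum.
by rewrite [leRHS](bigID (mem A)) /= lerDl sumr_ge0.
Qed.

Lemma cube_bound (R : realFieldType) (n a v s b1 b2 K C : R) :
  8 <= n -> 0 <= s -> 0 <= K -> 0 <= C -> 2 + 8 * K + 8 * C <= a ->
  n <= v + 1 + b1 + b2 -> b1 * a <= C * n -> 4 * b2 <= n ->
  v <= s * (1 + 4 * K * a) -> n <= s * a ^+ 3.
Proof.
move=> n_ge8 s_ge0 K_ge0 C_ge0 a_large n_le b1_bound b2_bound v_le.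
have a_ge1 : 1 <= a by lra.
have b1_small : 8 * b1 <= n.
  by rewrite -(ler_pM2r (lt_le_trans ltr01 a_ge1)); nra.
have cube : 2 * (1 + 4 * K * a) <= a ^+ 3.
  by rewrite !exprS expr0 mulr1; nra.
have := ler_wpM2l s_ge0 cube; lra.
Qed.

Section DependencyGraph.
Variables (R : realType) (gT : finGroupType) (d : nat) (delta : R).

Local Notation N := (#|gT|%:R : R).
Local Notation a := (N `^ delta).

Definition heavy (x y : gT) (r s t : nat) : bool :=
  [&& (1 <= t)%N, (t <= r)%N, (t <= s)%N &
      N `^ ((r + s - t - 1)%N%:R - delta) <= (pair_count d x y r s t)%:R].

(* Unlike [dep_adj], this relation does not require x, y != 1 and x != y;
   those conditions are enforced by the vertex set [sparse_vertices]. *)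
Definition dependent (x y : gT) : bool :=
  [exists q : 'I_d.+1 * 'I_d.+1 * 'I_d.+1, heavy x y q.1.1 q.1.2 q.2].

Lemma dep_adj_dependent x y : dep_adj d delta x y -> dependent x y.
Proof.
move=> [_ [_ [_ [r [s [t [rd [sd [tr [ts [t1 heavy_rst]]]]]]]]]]].
have td : (t < d.+1)%N by rewrite ltnS (leq_trans tr rd).
apply/existsP; exists (Ordinal (rd : (r < d.+1)%N), Ordinal (sd : (s < d.+1)%N), Ordinal td).
by rewrite /heavy /= t1 tr ts.
Qed.

Lemma card_gt0R : 0 < N.
Proof. by rewrite ltr0n; apply/card_gt0P; exists 1%g. Qed.

Lemma card_heavy r s t : (r <= d)%N -> (s <= d)%N ->
  #|[set p : gT * gT | heavy p.1 p.2 r s t]|%:R <= N * a * (pair_const d)%:R.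
Proof.
move=> rd sd; have N_gt0 := card_gt0R; have a_gt0 : 0 < a by rewrite powR_gt0.
have [/and3P [t1 tr ts] | rst_N] := boolP [&& (1 <= t)%N, (t <= r)%N & (t <= s)%N];
  last first.
  rewrite (_ : [set p | _] = set0) ?cards0 ?mulr_ge0 ?powR_ge0 //.
  apply/setP => p; rewrite !inE; apply/negP => /and4P [t1 tr ts _].
  by case/negP: rst_N; apply/and3P.
have [m rst] : exists m, (r + s - t)%N = m.+1 by exists (r + s - t).-1; lia.
set th := N `^ ((r + s - t - 1)%N%:R - delta).
have th_a : th * a = N ^+ m.
  rewrite /th -powRD ?(gt_eqF N_gt0) ?implybT // subrK rst subn1 succnK.
  by rewrite (@powR_mulrn R) // ltW.
have count : #|[set p : gT * gT | heavy p.1 p.2 r s t]|%:R * th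
    <= \sum_(p : gT * gT) (pair_count d p.1 p.2 r s t)%:R.
  by apply: markov_card => p; rewrite ?inE // => /and4P [].
have sum_le : \sum_(p : gT * gT) (pair_count d p.1 p.2 r s t)%:R
    <= N ^+ m * N * (pair_const d)%:R.
  rewrite -natr_sum -(pair_bigA _ (fun x y => pair_count d x y r s t)) /=.
  by rewrite -exprSr -natrX -natrM ler_nat -rst sum_pair_count.
rewrite -(ler_pM2r (exprn_gt0 m N_gt0)) -th_a.
by have := ler_wpM2r (ltW a_gt0) (le_trans count sum_le); rewrite -th_a; lra.
Qed.

Lemma card_dependent : #|[set p : gT * gT | dependent p.1 p.2]|%:R
  <= (d.+1 ^ 3)%:R * (N * a * (pair_const d)%:R).
Proof.
pose H (q : 'I_d.+1 * 'I_d.+1 * 'I_d.+1) := [set p : gT * gT | heavy p.1 p.2 q.1.1 q.1.2 q.2].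
have cover : [set p : gT * gT | dependent p.1 p.2] \subset \bigcup_q H q.
  by apply/subsetP => p /[!inE] /existsP [q hq]; apply/bigcupP; exists q; rewrite ?inE.
apply: le_trans (_ : (\sum_q #|H q|)%:R <= _).
  by rewrite ler_nat (leq_trans (subset_leq_card cover)) ?card_bigcup_leq.
apply: le_trans (_ : \sum_(q : 'I_d.+1 * 'I_d.+1 * 'I_d.+1) (N * a * (pair_const d)%:R) <= _).
  by rewrite natr_sum; apply: ler_sum => q _; apply: card_heavy; rewrite -ltnS.
rewrite sumr_const [leRHS]mulr_natl !card_prod !card_ord.
by rewrite -[3%N]/(1 + 1 + 1)%N !expnD expn1.
Qed.

Definition degree (x : gT) := #|[set y | dependent x y || dependent y x]|.

Lemma sum_degree : (\sum_x degree x)%:R <= (degree_const d)%:R * (N * a).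
Proof.
apply: le_trans (_ : (2 * #|[set p : gT * gT | dependent p.1 p.2]|)%:R <= _).
  rewrite ler_nat mul2n -addnn card_set_pairs.
  rewrite {2}(sum_card_exchange (fun x y => dependent x y)) -big_split /=.
  apply: leq_sum => x _; apply: leq_trans (leq_card_setU _ _).
  by apply/subset_leq_card/subsetP => y; rewrite !inE.
rewrite natrM (le_trans (ler_wpM2l _ card_dependent)) //.
by rewrite /degree_const !natrM; lra.
Qed.

Definition crowded (k : nat) :=
  [set x : gT | N `^ ((k - 1)%N%:R + delta) < #|edges_of_size d x k|%:R].

Lemma card_crowded k : (0 < k)%N -> (k <= d)%N ->
  #|crowded k|%:R * a <= N * (edge_const d)%:R.
Proof.
move=> k0 kd; have N_gt0 := card_gt0R.
have Nk_gt0 : 0 < N ^+ (k - 1) by rewrite exprn_gt0.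
have count : #|crowded k|%:R * (N ^+ (k - 1) * a)
    <= \sum_(x : gT) #|edges_of_size d x k|%:R.
  apply: markov_card => x; rewrite ?inE // => /ltW.
  by rewrite powRD ?(gt_eqF N_gt0) ?implybT // (@powR_mulrn R) // ltW.
have sum_le : \sum_(x : gT) #|edges_of_size d x k|%:R
    <= N ^+ (k - 1) * (N * (edge_const d)%:R).
  by rewrite -natr_sum mulrA -exprSr subn1 prednK // -natrX -natrM ler_nat sum_card_edges.
by rewrite -(ler_pM2l Nk_gt0); move: (le_trans count sum_le); lra.
Qed.

Definition overloaded := \bigcup_(k < d.+1 | (0 < k)%N) crowded k.

Lemma card_overloaded : #|overloaded|%:R * a <= (d.+1 * edge_const d)%:R * N.
Proof.
apply: le_trans (_ : (\sum_(k < d.+1 | (0 < k)%N) #|crowded k|)%:R * a <= _).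
  by rewrite ler_wpM2r ?powR_ge0 // ler_nat card_bigcup_leq.
rewrite natr_sum mulr_suml.
apply: le_trans (_ : \sum_(k < d.+1 | (0 < k)%N) N * (edge_const d)%:R <= _).
  by apply: ler_sum => k k0; apply: card_crowded; rewrite // -ltnS.
apply: le_trans (_ : \sum_(k < d.+1) N * (edge_const d)%:R <= _); last first.
  by rewrite sumr_const card_ord -mulr_natl natrM; lra.
rewrite [leRHS](bigID (fun k : 'I_d.+1 => (0 < k)%N)) /= lerDl.
by rewrite sumr_ge0 // => k _; rewrite mulr_ge0 ?ler0n.
Qed.

Definition hubs := [set x | 4 * (degree_const d)%:R * a < (degree x)%:R].

Lemma card_hubs : 4 * #|hubs|%:R <= N.
Proof.
have Ka_gt0 : 0 < (degree_const d)%:R * a.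
  by rewrite mulr_gt0 ?powR_gt0 ?card_gt0R // ltr0n !muln_gt0 !expn_gt0.
have count : #|hubs|%:R * (4 * (degree_const d)%:R * a) <= (\sum_x degree x)%:R.
  by rewrite natr_sum; apply: markov_card => x; rewrite ?inE // => /ltW.
by rewrite -(ler_pM2r Ka_gt0); move: (le_trans count sum_degree); lra.
Qed.

Definition sparse_vertices := ~: (1%g |: (overloaded :|: hubs)).

Lemma card_sparse_vertices :
  (#|gT| <= #|sparse_vertices| + 1 + #|overloaded| + #|hubs|)%N.
Proof.
rewrite -(cardsC (1%g |: (overloaded :|: hubs))) addnC -!addnA leq_add2l.
apply: leq_trans (leq_card_setU _ _) _; rewrite cards1 leq_add2l.
exact: leq_card_setU.
Qed.

Lemma card_sparse_dominated (S : {set gT}) : S \subset sparse_vertices ->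
  (#|sparse_vertices| <= \sum_(s in S) (degree_in dependent sparse_vertices s).+1)%N ->
  #|sparse_vertices|%:R <= #|S|%:R * (1 + 4 * (degree_const d)%:R * a).
Proof.
move=> /subsetP sub_S cover_S.
apply: le_trans (_ : (\sum_(s in S) (degree_in dependent sparse_vertices s).+1)%:R <= _).
  by rewrite ler_nat.
rewrite natr_sum [leRHS]mulr_natl -sumr_const; apply: ler_sum => s /sub_S.
rewrite !inE negb_or => /andP [_ /norP [_]]; rewrite -leNgt => deg_s.
rewrite -natr1 addrC lerD2l (le_trans _ deg_s) // ler_nat.
by apply/subset_leq_card/subsetP => y; rewrite !inE => /andP [].
Qed.

Lemma exists_sparse_independent_set : (8 <= #|gT|)%N ->
  2 + 8 * (degree_const d)%:R + 8 * (d.+1 * edge_const d)%:R <= a ->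
  exists I : {set gT},
    [/\ dep_independent d delta I, N `^ (1 - 3 * delta) <= #|I|%:R &
        forall x, x \in I -> forall k : nat, (1 <= k <= d)%N ->
          #|edges_of_size d x k|%:R <= N `^ ((k - 1)%N%:R + delta)].
Proof.
move=> N8 a_large; have N_gt0 := card_gt0R.
have [S /andP [sub_S /forall_inP indep_S] cover_S] :=
  exists_maximal_independent dependent sparse_vertices.
have sparse_S x : x \in S -> [/\ x != 1%g, x \notin overloaded & x \notin hubs].
  by move=> /(subsetP sub_S); rewrite !inE negb_or => /andP [-> /norP [-> ->]].
exists S; split.
- split; first by apply/negP => /sparse_S [/eqP].
  move=> x y Sx Sy xy /dep_adj_dependent dxy.
  by have /forall_inP/(_ y Sy) := indep_S x Sx; rewrite xy dxy.
- have := card_sparse_vertices; rewrite -(ler_nat R) !natrD => N_le.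
  rewrite powRB ?(gt_eqF N_gt0) ?implybT // (powRr1 (ltW N_gt0)) [3 * _]mulrC powRrM.
  rewrite (@powR_mulrn R) ?powR_ge0 // ler_pdivrMr ?exprn_gt0 ?powR_gt0 //.
  apply: cube_bound N_le card_overloaded card_hubs (card_sparse_dominated sub_S cover_S);
    by rewrite ?(ler_nat R 8).
- move=> x /sparse_S [_ /bigcupP not_overloaded _] k /andP [k0 kd].
  rewrite leNgt; apply/negP => crowded_k; apply: not_overloaded.
  by exists (Ordinal (kd : (k < d.+1)%N)); rewrite ?inE.
Qed.

End DependencyGraph.

Theorem lemma16 (R : realType) (d : nat) (delta eps : R) :
  (2 <= d)%N -> 0 < delta -> 0 < eps ->
  delta < eps / 4 -> delta < 1 / (4 * d%:R) ->
  exists N0 : nat, forall gT : finGroupType,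
    (N0 <= #|gT|)%N ->
    ((4 ^ (d + 2) * d ^ (d + 3))%N%:R <= #|gT|%:R `^ delta) ->
    exists I : {set gT},
      [/\ dep_independent d delta I,
          #|gT|%:R `^ (1 - 3 * delta) <= #|I|%:R &
          forall x, x \in I -> forall k : nat, (1 <= k <= d)%N ->
            #|edges_of_size d x k|%:R
              <= #|gT|%:R `^ ((k - 1)%N%:R + delta)].
Proof.
move=> _ delta_gt0 _ _ _.
pose M : R := 2 + 8 * (degree_const d)%:R + 8 * (d.+1 * edge_const d)%:R.
exists (maxn 8 (Num.Def.archi_bound (M `^ delta^-1))) => gT N0_le _.
apply: exists_sparse_independent_set; first exact: leq_trans (leq_maxl _ _) N0_le.
have N_large : M `^ delta^-1 <= #|gT|%:R.
  apply: le_trans (ltW (archi_boundP (powR_ge0 _ _))) _.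
  by rewrite ler_nat (leq_trans (leq_maxr _ _) N0_le).
have := ge0_ler_powR (ltW delta_gt0) (powR_ge0 M delta^-1) (ler0n _ _) N_large.
by rewrite -powRrM mulVf ?gt_eqF // powRr1 // !addr_ge0 ?mulr_ge0 ?ler0n.
Qed.
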